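(* Let $\ell\in\mathbb{N}$, $h\in\bigwedge(V_{2\ell}^* )$, let $G$ be an Eulerian graph and $\phi:E(G)\to[\ell]$. Then $s_{h,\phi}(G,\omega,\kappa)$ has the same value for all Eulerian orientations $\omega$ of $G$ and all local orderings $\kappa$ compatible with $\omega$. (Consequently, since $s_h((G,\omega,\kappa))=\sum_{\phi:E(G)\to[\ell]}s_{h,\phi}(G,\omega,\kappa)$, the same holds for $s_h((G,\omega,\kappa))$.)
   Context: Setup: $V_{2\ell}=\mathbb{C}^{2\ell}$ with standard basis $e_1,\dots,e_{2\ell}$; $f_i=-e_{i+\ell}$ for $i\le\ell$, $f_i=e_{i-\ell}$ for $i>\ell$. $\bigwedge(V_{2\ell}^* )=\bigoplus_{n=0}^{2\ell}\bigwedge^n(V_{2\ell}^* )$, and $h$ applied to an $n$-fold tensor means its skew-symmetric component $h^n$ applied to it. Graphs may have loops and multiple edges; Eulerian means every vertex has even degree. An Eulerian orientation $\omega$ makes in-degree equal out-degree at each vertex (a loop gives one incoming and one outgoing arc). A compatible local ordering $\kappa$ consists at each vertex $v$ of degree $d(v)$ of bijections $\kappa_v^-:\delta^-(v)\to\{1,3,\dots,d(v)-1\}$ and $\kappa_v^+:\delta^+(v)\to\{2,4,\dots,d(v)\}$; $\kappa_v^{-1}(i)$ is the arc at $v$ with label $i$. The $\kappa$-circuits are the closed walks $(v_1,a_1,\dots,a_i,v_i,a_{i+1},\dots,v_1)$ with $\kappa^-_{v_i}(a_i)+1=\kappa^+_{v_i}(a_{i+1})$ into which $\kappa$ decomposes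 the edge set; $c(G,\kappa)$ is their number. For $\phi:E(G)\to[\ell]$, $s_{h,\phi}(G,\omega,\kappa)=(-1)^{c(G,\kappa)}\sum_{\psi:E(G)\to\{0,\ell\}}\prod_{v\in V(G)} h\big(\bigotimes_{i=1,3,\dots,d(v)-1} e_{(\phi+\psi)(\kappa_v^{-1}(i))}\otimes f_{(\phi+\psi)(\kappa_v^{-1}(i+1))}\big)$, and $s_h((G,\omega,\kappa))$ is the same expression with the sum over all $\phi':E(G)\to[2\ell]$ in place of $\phi+\psi$. *)

From HB Require Import structures.
From mathcomp Require Import all_boot all_order all_algebra all_fingroup all_field.
Set Implicit Arguments. Unset Strict Implicit. Unset Printing Implicit Defensive.
Import Order.TTheory GRing.Theory Num.Theory.
Local Open Scope ring_scope.

(* Standard basis vector e_k (0-based index k : nat, k < 2l); e_k = 0 if k >= 2l *)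
Definition evec (R : nzRingType) (l k : nat) : 'rV[R]_(2 * l) :=
  \row_(j < 2 * l) ((j : nat) == k)%:R.

Definition fvec (R : nzRingType) (l k : nat) : 'rV[R]_(2 * l) :=
  if (k < l)%N then - evec R l (k + l) else evec R l (k - l).

Definition upd (R : nzRingType) (l n : nat) (x : {ffun 'I_n -> 'rV[R]_(2 * l)})
  (k : 'I_n) (u : 'rV[R]_(2 * l)) : {ffun 'I_n -> 'rV[R]_(2 * l)} :=
  [ffun j => if j == k then u else x j].

Definition multilinear (R : nzRingType) (l n : nat)
  (g : {ffun 'I_n -> 'rV[R]_(2 * l)} -> R) : Prop :=
  forall (x : {ffun 'I_n -> 'rV[R]_(2 * l)}) (k : 'I_n) (a : R) (u v : 'rV[R]_(2 * l)),
    g (upd x k (a *: u + v)) = a * g (upd x k u) + g (upd x k v).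

Definition alternating (R : nzRingType) (l n : nat)
  (g : {ffun 'I_n -> 'rV[R]_(2 * l)} -> R) : Prop :=
  forall (x : {ffun 'I_n -> 'rV[R]_(2 * l)}) (i j : 'I_n), i != j -> x i = x j -> g x = 0.

(* h in /\(V^* ): a family (h^n)_n of alternating multilinear n-forms
   (for n > 2l these are automatically 0). *)
Definition exterior_form (R : nzRingType) (l : nat)
  (h : forall n : nat, {ffun 'I_n -> 'rV[R]_(2 * l)} -> R) : Prop :=
  forall n, multilinear (h n) /\ alternating (h n).

(* A (multi)graph with loops: vertex set V, edge set E, each edge e has
   ends end1 e, end2 e (equal for a loop). *)

Definition deg (V E : finType) (end1 end2 : E -> V) (v : V) : nat :=
  (#|[set e | end1 e == v]| + #|[set e | end2 e == v]|)%N.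

Definition eulerian (V E : finType) (end1 end2 : E -> V) : Prop :=
  forall v, ~~ odd (deg end1 end2 v).

Definition tail (V E : finType) (end1 end2 : E -> V) (om : E -> bool) (e : E) : V :=
  if om e then end1 e else end2 e.
Definition head (V E : finType) (end1 end2 : E -> V) (om : E -> bool) (e : E) : V :=
  if om e then end2 e else end1 e.

Definition eulerian_orientation (V E : finType) (end1 end2 : E -> V) (om : E -> bool) : Prop :=
  forall v, #|[set e | head end1 end2 om e == v]| = #|[set e | tail end1 end2 om e == v]|.

(* Since each arc enters exactly
   one vertex (its head) and leaves exactly one vertex (its tail), the family
   (kappa^-_v)_v is encoded by kin : E -> nat (label of the arc at its head),
   and (kappa^+_v)_v by kout : E -> nat (label of the arc at its tail).
   kappa^-_v : delta^-(v) -> {1,3,...,d(v)-1} bijective,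
   kappa^+_v : delta^+(v) -> {2,4,...,d(v)}   bijective. *)
Definition compatible_ordering (V E : finType) (end1 end2 : E -> V) (om : E -> bool)
  (kin kout : E -> nat) : Prop :=
  forall v : V,
    let d := deg end1 end2 v in
    {in [set e | head end1 end2 om e == v] &, injective kin} /\
    (forall e, head end1 end2 om e = v -> odd (kin e) /\ (kin e < d)%N) /\
    (forall i, odd i -> (i < d)%N -> exists e, head end1 end2 om e = v /\ kin e = i) /\
    {in [set e | tail end1 end2 om e == v] &, injective kout} /\
    (forall e, tail end1 end2 om e = v -> ~~ odd (kout e) /\ (0 < kout e <= d)%N) /\
    (forall i, ~~ odd i -> (0 < i <= d)%N -> exists e, tail end1 end2 om e = v /\ kout e = i).

Definition arc_at (V E : finType) (end1 end2 : E -> V) (om : E -> bool)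
  (kin kout : E -> nat) (v : V) (i : nat) : option E :=
  if odd i then [pick e | (head end1 end2 om e == v) && (kin e == i)]
  else [pick e | (tail end1 end2 om e == v) && (kout e == i)].

Definition ksucc (V E : finType) (end1 end2 : E -> V) (om : E -> bool)
  (kin kout : E -> nat) (a : E) : E :=
  odflt a [pick b | (tail end1 end2 om b == head end1 end2 om a) && (kout b == (kin a).+1)].

Definition ncircuits (V E : finType) (end1 end2 : E -> V) (om : E -> bool)
  (kin kout : E -> nat) : nat :=
  #|[set [set b | fconnect (ksucc end1 end2 om kin kout) a b] | a : E]|.

(* Indices are 0-based: phi : E -> 'I_l stands for [l] = {1..l}, and
   psi : E -> bool stands for E -> {0, l} (true |-> l).  The index
   (phi + psi)(e) in [2l] is phi e + l * psi e (0-based). *)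
Definition vec_of (R : nzRingType) (l : nat) (E : finType) (g : E -> 'rV[R]_(2 * l))
  (o : option E) : 'rV[R]_(2 * l) :=
  if o is Some e then g e else 0.

(* The d(v)-fold tensor  (x) _{i=1,3,..,d-1} e_{..(kappa^-1(i))} (x) f_{..(kappa^-1(i+1))};
   argument j (0-based) carries label j+1. *)
Definition local_args (R : nzRingType) (l : nat) (V E : finType) (end1 end2 : E -> V)
  (om : E -> bool) (kin kout : E -> nat) (idx : E -> nat) (v : V)
  : {ffun 'I_(deg end1 end2 v) -> 'rV[R]_(2 * l)} :=
  [ffun j : 'I_(deg end1 end2 v) =>
     if odd j then vec_of (fun e => fvec R l (idx e)) (arc_at end1 end2 om kin kout v j.+1)
     else vec_of (fun e => evec R l (idx e)) (arc_at end1 end2 om kin kout v j.+1)].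

Definition s_hphi (R : nzRingType) (l : nat)
  (h : forall n : nat, {ffun 'I_n -> 'rV[R]_(2 * l)} -> R)
  (V E : finType) (end1 end2 : E -> V) (phi : E -> 'I_l)
  (om : E -> bool) (kin kout : E -> nat) : R :=
  (-1) ^+ ncircuits end1 end2 om kin kout *
  \sum_(psi : {ffun E -> bool})
    \prod_(v : V)
      h (deg end1 end2 v)
        (@local_args R l V E end1 end2 om kin kout (fun e => (phi e + l * psi e)%N) v).

(* For fixed psi the summand of s_{h,phi} is a product over the vertices v of h
   applied to vectors sitting on the darts (half-edges) at v, listed in the order
   given by kappa.  Passing from (omega1, kappa1) to (omega2, kappa2) while replacing
   psi by psi + l [omega1 <> omega2] changes every dart vector by a sign, because
   f_k = - e_(k+l) and f_(k+l) = e_k, and permutes the darts inside each vertex,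
   which costs the sign of that permutation since every h^n is alternating.
   To compute the latter, each kappa yields a bijection from E x bool onto the
   darts, sending the two copies of an arc to the dart where it enters a vertex
   and the dart where its kappa-successor leaves it; two such bijections differ
   by an even permutation, and the sign of each is (-1)^(|E| + c(G,kappa))
   times (-1)^#{e | omega e}.  All signs cancel except (-1)^(c(G,kappa1) + c(G,kappa2)),
   which is absorbed by the prefactors. *)

From Pilot Require Import Defs.
From HB Require Import structures.
From mathcomp Require Import all_boot all_order all_algebra all_fingroup.
From mathcomp Require Import ring.
Set Implicit Arguments. Unset Strict Implicit. Unset Printing Implicit Defensive.
Import Order.TTheory GRing.Theory Num.Theory.
Local Open Scope ring_scope.

Lemma upd_id (R : nzRingType) (l n : nat) (x : {ffun 'I_n -> 'rV[R]_(2 * l)}) k :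
  upd x k (x k) = x.
Proof. by apply/ffunP => j; rewrite ffunE; case: eqP => // ->. Qed.

Section AlternatingForm.
Variables (R : comNzRingType) (l n : nat).
Variable g : {ffun 'I_n -> 'rV[R]_(2 * l)} -> R.
Hypothesis g_lin : multilinear g.

Lemma multilinear_upd0 x k : g (upd x k 0) = 0.
Proof.
have := g_lin x k 1 0 0; rewrite scaler0 addr0 mul1r => double.
by apply: (@addrI _ (g (upd x k 0))); rewrite addr0 -double.
Qed.

Lemma multilinear_updZ x k a u : g (upd x k (a *: u)) = a * g (upd x k u).
Proof. by have := g_lin x k a u 0; rewrite addr0 multilinear_upd0 addr0. Qed.

Lemma multilinear_updD x k u v : g (upd x k (u + v)) = g (upd x k u) + g (upd x k v).
Proof. by have := g_lin x k 1 u v; rewrite scale1r mul1r. Qed.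

Lemma multilinear_scale (c : 'I_n -> R) (x : {ffun 'I_n -> 'rV[R]_(2 * l)}) :
  g [ffun m => c m *: x m] = (\prod_m c m) * g x.
Proof.
suff scale_on s : uniq s ->
    g [ffun m => if m \in s then c m *: x m else x m] = (\prod_(m <- s) c m) * g x.
  have := scale_on (enum 'I_n) (enum_uniq _); rewrite big_enum /=.
  by under eq_ffun do rewrite mem_enum.
elim: s => [_|a s IHs /= /andP[a_notin_s uniq_s]].
  by rewrite big_nil mul1r; congr g; apply/ffunP => m; rewrite !ffunE.
set y := [ffun m => if m \in s then c m *: x m else x m].
have -> : [ffun m => if m \in a :: s then c m *: x m else x m] = upd y a (c a *: y a).
  apply/ffunP => m; rewrite !ffunE inE.
  by have [->|_] := eqVneq m a; rewrite ?(negbTE a_notin_s).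
by rewrite multilinear_updZ upd_id IHs // big_cons mulrA.
Qed.

Hypothesis g_alt : alternating g.

Lemma alternating_tperm (x : {ffun 'I_n -> 'rV[R]_(2 * l)}) (i j : 'I_n) : i != j ->
  g [ffun m => x (tperm i j m)] = - g x.
Proof.
move=> nij.
pose y a b := [ffun m => if m == i then a else if m == j then b else x m].
have upd_i a a' b : upd (y a' b) i a = y a b.
  by apply/ffunP => m; rewrite !ffunE; case: eqP.
have upd_j a b b' : upd (y a b') j b = y a b.
  apply/ffunP => m; rewrite !ffunE; case: (m =P j) => [->|//].
  by rewrite eq_sym (negbTE nij).
have addl u w b : g (y (u + w) b) = g (y u b) + g (y w b).
  by rewrite -(upd_i _ u) multilinear_updD !upd_i.
have addr a u w : g (y a (u + w)) = g (y a u) + g (y a w).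
  by rewrite -(upd_j _ _ u) multilinear_updD !upd_j.
have diag a : g (y a a) = 0.
  by apply: (g_alt nij); rewrite !ffunE eqxx eq_sym (negbTE nij) eqxx.
have -> : x = y (x i) (x j).
  by apply/ffunP => m; rewrite !ffunE; case: (m =P i) => [->|_] //; case: (m =P j) => // ->.
have -> : [ffun m => y (x i) (x j) (tperm i j m)] = y (x j) (x i).
  apply/ffunP => m; rewrite !ffunE; case: tpermP => [->|->|/eqP nim /eqP njm].
  - by rewrite !eqxx eq_sym (negbTE nij).
  - by rewrite !eqxx eq_sym (negbTE nij).
  - by rewrite (negbTE nim) (negbTE njm).
apply/eqP; rewrite -addr_eq0; apply/eqP.
by have := diag (x i + x j); rewrite addl !addr !diag add0r addr0 addrC.
Qed.

End AlternatingForm.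

Section BlockForm.
Variables (R : comNzRingType) (l : nat).
Variable h : forall n : nat, {ffun 'I_n -> 'rV[R]_(2 * l)} -> R.
Hypothesis h_ext : exterior_form h.
Variables (D V : finType) (block : D -> V) (arity : V -> nat) (dart : V -> nat -> D).
Hypothesis dart_block : forall v (j : 'I_(arity v)), block (dart v j) = v.
Hypothesis dart_inj : forall v (j k : 'I_(arity v)), dart v j = dart v k -> j = k.
Hypothesis dart_surj : forall v x, block x = v -> exists j : 'I_(arity v), dart v j = x.

Definition block_form (z : D -> 'rV[R]_(2 * l)) : R :=
  \prod_v h [ffun j : 'I_(arity v) => z (dart v j)].

Lemma eq_block_form z z' : z =1 z' -> block_form z = block_form z'.
Proof.
by move=> eq_z; apply: eq_bigr => v _; congr h; apply/ffunP => j; rewrite !ffunE eq_z.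
Qed.

Lemma block_form_tperm z x y : x != y -> block x = block y ->
  block_form (fun u => z (tperm x y u)) = - block_form z.
Proof.
move=> nxy bxy; rewrite /block_form (bigD1 (block x)) //= [in RHS](bigD1 (block x)) //=.
rewrite -mulNr; congr (_ * _); last first.
  apply: eq_bigr => u ux; congr h; apply/ffunP => j; rewrite !ffunE tpermD //.
    by apply: contraNneq ux => ->; rewrite dart_block.
  by apply: contraNneq ux => eyd; rewrite bxy eyd dart_block.
set v := block x.
have [j dart_j] := dart_surj (erefl v).
have [k dart_k] := dart_surj (esym bxy).
have njk : j != k by apply: contraNneq nxy => ejk; rewrite -dart_j -dart_k ejk.
have [h_lin h_alt] := h_ext (arity v).
rewrite -(alternating_tperm h_lin h_alt _ njk); congr h; apply/ffunP => m; rewrite !ffunE.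
case: (tpermP j k m) => [->|->|/eqP nmj /eqP nmk]; rewrite -?dart_j -?dart_k ?tpermL ?tpermR //.
rewrite tpermD //; apply/eqP => /dart_inj ejm.
  by move: nmj; rewrite ejm eqxx.
by move: nmk; rewrite ejm eqxx.
Qed.

Lemma block_form_perm (b : {perm D}) : (forall x, block (b x) = block x) ->
  forall z, block_form (fun u => z (b u)) = (-1) ^+ odd_perm b * block_form z.
Proof.
have [N] := ubnP #|[pred x | b x != x]|.
elim: N b => // N IHN b /ltnSE-moved_le_N b_block z.
have [x bx | b_id] := pickP (fun x => b x != x); last first.
  have -> : b = 1%g by apply/permP=> y; apply/eqP/idPn; rewrite perm1 b_id.
  by rewrite odd_perm1 mul1r; apply: eq_block_form => u; rewrite perm1.
pose t := tperm x (b x); pose c := (b * t)%g.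
have bct : b = (c * t)%g by rewrite /c -mulgA tperm2 mulg1.
have c_block y : block (c y) = block y.
  rewrite permM /t; case: tpermP => [eyx|eyb|_ _]; rewrite ?b_block //.
    by rewrite -eyx b_block.
  by rewrite -(b_block x) -eyb b_block.
have c_moved : (#|[pred y | c y != y]| < N)%N.
  rewrite (cardD1 x) !inE bx in moved_le_N; apply: leq_ltn_trans moved_le_N.
  apply: subset_leq_card; apply/subsetP=> y; rewrite !inE /c permM /t.
  have [-> | ne_yx] := eqVneq y x; first by rewrite tpermR eqxx.
  case: tpermP => [eyx _|/perm_inj eyx|//]; first by rewrite eyx eq_sym.
  by rewrite eyx eqxx in ne_yx.
rewrite (@eq_block_form _ (fun u => z (t (c u)))); last by move=> u; rewrite bct permM.
rewrite (IHN c c_moved c_block (fun w => z (t w))) block_form_tperm ?b_block //; last first.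
  by rewrite eq_sym.
by rewrite bct odd_permM odd_tperm eq_sym bx signr_addb expr1 mulrN mulrN1 mulNr.
Qed.

Lemma block_form_scale (c : D -> R) z :
  block_form (fun u => c u *: z u) = (\prod_u c u) * block_form z.
Proof.
rewrite /block_form; under eq_bigr => v _.
  have [h_lin _] := h_ext (arity v).
  rewrite (_ : [ffun j => _] =
    [ffun j : 'I_(arity v) => c (dart v j) *: [ffun j : 'I_(arity v) => z (dart v j)] j]);
    last by apply/ffunP => j; rewrite !ffunE.
  rewrite multilinear_scale //; over.
rewrite big_split /=; congr (_ * _).
rewrite (partition_big block xpredT) //=; apply: eq_bigr => v _.
rewrite (eq_bigl (mem [set dart v (nat_of_ord j) | j : 'I_(arity v)])); last first.
  move=> u; apply/eqP/imsetP => [bu|[j _ ->]]; last by rewrite dart_block.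
  by have [j <-] := dart_surj bu; exists j.
by rewrite big_imset //= => j k _ _ /dart_inj.
Qed.

End BlockForm.

Section DartPerms.
Variable E : finType.
Local Notation D := (E * bool)%type.

Lemma odd_perm_morph (L : {perm E} -> {perm D}) (b : bool) :
  {morph L : s t / (s * t)%g} ->
  (forall a c : E, a != c -> odd_perm (L (tperm a c)) = b) ->
  forall s, odd_perm (L s) = b && odd_perm s.
Proof.
move=> LM Ltperm s; have [ts -> dts] := prod_tpermP s.
elim: ts dts => [_|t ts IHts /= /andP[dt dts]].
  rewrite big_nil odd_perm1 andbF.
  by have := odd_permM (L 1%g) (L 1%g); rewrite -LM mulg1 addbb.
rewrite big_cons LM odd_permM Ltperm // IHts // odd_mul_tperm dt.
by case: b {Ltperm IHts}; case: (odd_perm _).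
Qed.

Lemma pair_neq_fst (a c : E) (b : bool) : a != c -> (a, b) != (c, b).
Proof. by apply: contra => /eqP [->]. Qed.

Lemma perm_on_false_inj (s : {perm E}) :
  injective (fun x : D => if x.2 then x else (s x.1, false)).
Proof. by move=> [a [|]] [c [|]] //= [] // /perm_inj ->. Qed.
Definition perm_on_false s := perm (@perm_on_false_inj s).

Lemma odd_perm_on_false s : odd_perm (perm_on_false s) = odd_perm s.
Proof.
apply: (@odd_perm_morph perm_on_false true).
  by move=> s1 s2; apply/permP => -[a [|]]; rewrite !permM !permE.
move=> a c nac; suff -> : perm_on_false (tperm a c) = tperm (a, false) (c, false).
  by rewrite odd_tperm pair_neq_fst.
apply/permP => -[e [|]]; rewrite [in LHS]permE /=.
  by rewrite tpermD // xpair_eqE andbF.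
case: tpermP => [->|->|/eqP ne_ae /eqP ne_ce]; rewrite ?tpermL ?tpermR //.
by rewrite tpermD // pair_neq_fst // eq_sym.
Qed.

Lemma perm_fst_inj (s : {perm E}) : injective (fun x : D => (s x.1, x.2)).
Proof. by move=> [a b] [c d] /= [/perm_inj -> ->]. Qed.
Definition perm_fst s := perm (@perm_fst_inj s).

Lemma odd_perm_fst (r : {perm D}) (p : E -> E) :
  (forall x, r x = (p x.1, x.2)) -> odd_perm r = false.
Proof.
move=> rE; have p_inj : injective p.
  by move=> a c pac; have /perm_inj[] : r (a, true) = r (c, true) by rewrite !rE pac.
have -> : r = perm_fst (perm p_inj) by apply/permP => x; rewrite rE !permE.
apply: (@odd_perm_morph perm_fst false).
  by move=> s1 s2; apply/permP => -[a b]; rewrite !permM !permE.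
move=> a c nac.
suff -> : perm_fst (tperm a c) = (tperm (a, true) (c, true) * tperm (a, false) (c, false))%g.
  by rewrite odd_permM !odd_tperm !pair_neq_fst.
apply/permP => -[e b]; rewrite permM [in LHS]permE /=.
have nca : c != a by rewrite eq_sym.
case: (tpermP a c e) => [->|->|/eqP ne_ae /eqP ne_ce]; case: b; rewrite !permE /=;
  by rewrite ?xpair_eqE ?eqxx ?andbF ?andbT ?(negbTE nac) ?(negbTE nca)
             ?(negbTE ne_ae) ?(negbTE ne_ce) /= ?xpair_eqE ?eqxx ?andbF ?andbT
             ?(negbTE nac) ?(negbTE nca) ?(negbTE ne_ae) ?(negbTE ne_ce).
Qed.

Lemma flip_perm_inj (f : E -> bool) : injective (fun x : D => (x.1, x.2 (+) f x.1)).
Proof. by move=> [a b] [c d] /= [<-] /addIb ->. Qed.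
Definition flip_perm f := perm (@flip_perm_inj f).

Lemma sign_flip_perm (R : comPzRingType) (f : E -> bool) :
  (-1) ^+ odd_perm (flip_perm f) = \prod_e (-1) ^+ f e :> R.
Proof.
have [N] := ubnP #|[pred e | f e]|; elim: N f => // N IHN f /ltnSE-size_f.
have [e0 fe0 | f0] := pickP f; last first.
  have -> : flip_perm f = 1%g by apply/permP => -[a b]; rewrite permE perm1 /= f0 addbF.
  by rewrite odd_perm1 expr0 big1 // => e _; rewrite f0.
pose f' e := f e && (e != e0).
have -> : flip_perm f = (tperm (e0, true) (e0, false) * flip_perm f')%g.
  apply/permP => -[a b]; rewrite permM !permE /= /f'.
  have [->|nae] := eqVneq a e0; last by rewrite !xpair_eqE (negbTE nae) /= nae andbT.
  by rewrite fe0; case: b; rewrite !xpair_eqE !eqxx /= ?eqxx ?andbF.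
rewrite odd_permM odd_tperm signr_addb IHN; last first.
  rewrite (cardD1 e0) inE fe0 in size_f; apply: leq_ltn_trans size_f.
  by apply: subset_leq_card; apply/subsetP => e; rewrite !inE /f' andbC.
rewrite [in RHS](bigD1 e0) //= fe0 xpair_eqE eqxx /= expr1; congr (_ * _).
rewrite (bigD1 e0) //= /f' eqxx andbF expr0 mul1r.
by apply: eq_bigr => e ne; rewrite ne andbT.
Qed.

End DartPerms.

Section Darts.
Variables (V E : finType) (end1 end2 : E -> V).
Local Notation D := (E * bool)%type.
Local Notation deg := (deg end1 end2).

Definition dart_vertex (x : D) : V := if x.2 then end1 x.1 else end2 x.1.

Definition dart_label (om : E -> bool) (kin kout : E -> nat) (x : D) : nat :=
  if x.2 == om x.1 then kout x.1 else kin x.1.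

(* The dart at [v] with label [j.+1]; [x0] is a junk value, never reached when [j < deg v]. *)
Definition dart_at (x0 : D) (om : E -> bool) (kin kout : E -> nat) (v : V) (j : nat) : D :=
  if arc_at end1 end2 om kin kout v j.+1 is Some e
  then (e, if odd j.+1 then ~~ om e else om e) else x0.

Variables (om : E -> bool) (kin kout : E -> nat).
Hypothesis kappa : compatible_ordering end1 end2 om kin kout.
Hypothesis G_euler : eulerian end1 end2.
Local Notation head := (Defs.head end1 end2 om).
Local Notation tail := (Defs.tail end1 end2 om).
Local Notation ksucc := (ksucc end1 end2 om kin kout).
Local Notation label := (dart_label om kin kout).

Lemma dart_vertex_head e : dart_vertex (e, ~~ om e) = head e.
Proof. by rewrite /dart_vertex /Defs.head /=; case: (om e). Qed.
Lemma dart_vertex_tail e : dart_vertex (e, om e) = tail e.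
Proof. by rewrite /dart_vertex /Defs.tail /=; case: (om e). Qed.
Lemma dart_label_head e : label (e, ~~ om e) = kin e.
Proof. by rewrite /dart_label /=; case: (om e). Qed.
Lemma dart_label_tail e : label (e, om e) = kout e.
Proof. by rewrite /dart_label /= eqxx. Qed.

Lemma kin_inj v : {in [set e | head e == v] &, injective kin}.
Proof. by case: (kappa v). Qed.
Lemma kin_odd_lt e : odd (kin e) /\ (kin e < deg (head e))%N.
Proof. by case: (kappa (head e)) => _ [kin_range _]; apply: kin_range. Qed.
Lemma kin_onto v i : odd i -> (i < deg v)%N -> exists e, head e = v /\ kin e = i.
Proof. by case: (kappa v) => _ [_ [kin_onto _]]; apply: kin_onto. Qed.
Lemma kout_inj v : {in [set e | tail e == v] &, injective kout}.
Proof. by case: (kappa v) => _ [_ [_ []]]. Qed.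
Lemma kout_even_le e : ~~ odd (kout e) /\ (0 < kout e <= deg (tail e))%N.
Proof. by case: (kappa (tail e)) => _ [_ [_ [_ [kout_range _]]]]; apply: kout_range. Qed.
Lemma kout_onto v i : ~~ odd i -> (0 < i <= deg v)%N -> exists e, tail e = v /\ kout e = i.
Proof. by case: (kappa v) => _ [_ [_ [_ [_ kout_onto]]]]; apply: kout_onto. Qed.

Lemma arc_at_kin e : arc_at end1 end2 om kin kout (head e) (kin e) = Some e.
Proof.
rewrite /arc_at (proj1 (kin_odd_lt e)).
case: pickP => [e' /andP[/eqP he' /eqP ke'] | none]; last by have := none e; rewrite !eqxx.
by congr Some; apply: (kin_inj (v := head e)); rewrite ?inE ?he'.
Qed.

Lemma arc_at_kout e : arc_at end1 end2 om kin kout (tail e) (kout e) = Some e.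
Proof.
rewrite /arc_at (negbTE (proj1 (kout_even_le e))).
case: pickP => [e' /andP[/eqP te' /eqP ke'] | none]; last by have := none e; rewrite !eqxx.
by congr Some; apply: (kout_inj (v := tail e)); rewrite ?inE ?te'.
Qed.

Variable x0 : D.
Local Notation dart := (dart_at x0 om kin kout).

Lemma dart_atP v j : (j < deg v)%N ->
  exists e, [/\ arc_at end1 end2 om kin kout v j.+1 = Some e,
    dart v j = (e, if odd j.+1 then ~~ om e else om e) &
    if odd j.+1 then head e = v /\ kin e = j.+1 else tail e = v /\ kout e = j.+1].
Proof.
move=> lt_j_deg; case odd_j1: (odd j.+1).
  have lt_j1_deg : (j.+1 < deg v)%N.
    (* odd labels stop below the even degree *)
    rewrite ltn_neqAle lt_j_deg andbT; apply: contraTneq (G_euler v) => <-.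
    by rewrite odd_j1.
  have [e [<- kin_e]] := kin_onto odd_j1 lt_j1_deg.
  by exists e; rewrite /dart_at -kin_e arc_at_kin kin_e odd_j1.
have [e [<- kout_e]] := kout_onto (negbT odd_j1) lt_j_deg.
by exists e; rewrite /dart_at -kout_e arc_at_kout kout_e odd_j1.
Qed.

Lemma dart_at_vertex_label v j : (j < deg v)%N ->
  dart_vertex (dart v j) = v /\ label (dart v j) = j.+1.
Proof.
move=> /dart_atP [e [_ -> ve]]; case: (odd j.+1) ve => -[<- <-].
  by rewrite dart_vertex_head dart_label_head.
by rewrite dart_vertex_tail dart_label_tail.
Qed.

Lemma dart_at_label x : [/\ (0 < label x)%N, ((label x).-1 < deg (dart_vertex x))%N
  & dart (dart_vertex x) (label x).-1 = x].
Proof.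
case: x => e b; have [->|->] : b = om e \/ b = ~~ om e by case: b; case: (om e); auto.
  rewrite dart_vertex_tail dart_label_tail; have [even_k /andP[k_gt0 k_le]] := kout_even_le e.
  split => //; first by rewrite -ltnS prednK.
  by rewrite /dart_at prednK // arc_at_kout (negbTE even_k).
rewrite dart_vertex_head dart_label_head; have [odd_k k_lt] := kin_odd_lt e.
have k_gt0 : (0 < kin e)%N by case: (kin e) odd_k.
split => //; first exact: leq_ltn_trans (leq_pred _) k_lt.
by rewrite /dart_at prednK // arc_at_kin odd_k.
Qed.

Lemma dart_at_vertex v (j : 'I_(deg v)) : dart_vertex (dart v j) = v.
Proof. exact: (dart_at_vertex_label (ltn_ord j)).1. Qed.

Lemma dart_at_inj v (j k : 'I_(deg v)) : dart v j = dart v k -> j = k.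
Proof.
move=> ejk; apply: val_inj; apply: succn_inj.
by rewrite -(dart_at_vertex_label (ltn_ord j)).2 ejk (dart_at_vertex_label (ltn_ord k)).2.
Qed.

Lemma dart_at_surj v x : dart_vertex x = v -> exists j : 'I_(deg v), dart v j = x.
Proof. by move=> <-; have [_ lt_deg dart_x] := dart_at_label x; exists (Ordinal lt_deg). Qed.

(* A leaving dart carries [f_idx], an entering dart carries [e_idx]. *)
Definition dart_vec (R : nzRingType) (l : nat) (idx : E -> nat) (x : D) : 'rV[R]_(2 * l) :=
  if x.2 == om x.1 then fvec R l (idx x.1) else evec R l (idx x.1).

Lemma local_argsE (R : nzRingType) (l : nat) (idx : E -> nat) v :
  local_args R l end1 end2 om kin kout idx v =
  [ffun j : 'I_(deg v) => dart_vec R l idx (dart v j)].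
Proof.
apply/ffunP => j; rewrite !ffunE; have [e [-> -> _]] := dart_atP (ltn_ord j).
by rewrite /dart_vec /=; case: (odd j) => /=; rewrite ?eqxx //; case: (om e).
Qed.

Lemma ksucc_tail_kout a : tail (ksucc a) = head a /\ kout (ksucc a) = (kin a).+1.
Proof.
have [odd_k k_lt] := kin_odd_lt a.
have even_k1 : ~~ odd (kin a).+1 by rewrite /= odd_k.
have [b [tail_b kout_b]] := kout_onto (v := head a) even_k1 k_lt.
rewrite /ksucc; case: pickP => [b' /andP[/eqP -> /eqP ->] | none] //.
by have := none b; rewrite tail_b kout_b !eqxx.
Qed.

Lemma ksucc_inj : injective ksucc.
Proof.
move=> a a' eq_succ; have [t1 k1] := ksucc_tail_kout a; have [t2 k2] := ksucc_tail_kout a'.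
have hh : head a = head a' by rewrite -t1 -t2 eq_succ.
apply: (kin_inj (v := head a)); rewrite ?inE ?hh //.
by apply: succn_inj; rewrite -k1 -k2 eq_succ.
Qed.

Definition ksucc_perm := perm ksucc_inj.

Lemma ncircuits_porbits : ncircuits end1 end2 om kin kout = #|porbits ksucc_perm|.
Proof.
rewrite /ncircuits /porbits; congr #|pred_of_set _|.
apply: eq_imset => a; apply/setP => b; rewrite inE.
have iterE n : iter n ksucc a = (ksucc_perm ^+ n)%g a.
  by rewrite permX; apply: eq_iter => y; rewrite permE.
apply/idP/porbitP => [conn_ab | [i ->]]; last by rewrite -iterE fconnect_iter.
by exists (findex ksucc a b); rewrite -iterE iter_findex.
Qed.

(* Sends the two darts of [e] to the dart entering [head e] and the dart leaving
   it along the kappa-successor of [e]. *)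
Definition walk_perm := (perm_on_false ksucc_perm * flip_perm om)%g.

Lemma walk_perm_true e : walk_perm (e, true) = (e, ~~ om e).
Proof. by rewrite permM !permE. Qed.

Lemma walk_perm_false e : walk_perm (e, false) = (ksucc e, om (ksucc e)).
Proof. by rewrite permM !permE. Qed.

Lemma sign_walk_perm (R : comPzRingType) : (-1) ^+ odd_perm walk_perm =
  (-1) ^+ #|E| * (-1) ^+ ncircuits end1 end2 om kin kout * \prod_e (-1) ^+ om e :> R.
Proof.
rewrite odd_permM signr_addb sign_flip_perm odd_perm_on_false ncircuits_porbits.
by rewrite /odd_perm signr_addb !signr_odd.
Qed.

End Darts.

Section Invariance.
Variables (R : comNzRingType) (l : nat).
Variable h : forall n : nat, {ffun 'I_n -> 'rV[R]_(2 * l)} -> R.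
Hypothesis h_ext : exterior_form h.
Variables (V E : finType) (end1 end2 : E -> V).
Hypothesis G_euler : eulerian end1 end2.
Variable phi : E -> 'I_l.
Local Notation D := (E * bool)%type.
Local Notation deg := (deg end1 end2).
Local Notation vertex := (dart_vertex end1 end2).
Variable x0 : D.

Definition psi_index (psi : {ffun E -> bool}) (e : E) : nat := (phi e + l * psi e)%N.

Lemma s_hphiE om kin kout : compatible_ordering end1 end2 om kin kout ->
  s_hphi h end1 end2 phi om kin kout = (-1) ^+ ncircuits end1 end2 om kin kout *
    \sum_(psi : {ffun E -> bool})
      block_form h deg (dart_at end1 end2 x0 om kin kout) (dart_vec om R l (psi_index psi)).
Proof.
move=> kappa; congr (_ * _); apply: eq_bigr => psi _; apply: eq_bigr => v _.
by rewrite (local_argsE kappa G_euler x0).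
Qed.

Variables (om1 : E -> bool) (kin1 kout1 : E -> nat).
Variables (om2 : E -> bool) (kin2 kout2 : E -> nat).
Hypothesis kappa1 : compatible_ordering end1 end2 om1 kin1 kout1.
Hypothesis kappa2 : compatible_ordering end1 end2 om2 kin2 kout2.
Local Notation dart1 := (dart_at end1 end2 x0 om1 kin1 kout1).
Local Notation dart2 := (dart_at end1 end2 x0 om2 kin2 kout2).
Local Notation label1 := (dart_label om1 kin1 kout1).
Local Notation label2 := (dart_label om2 kin2 kout2).

Definition relabel_fun (x : D) : D := dart2 (vertex x) (label1 x).-1.

Lemma relabel_vertex_label x : vertex (relabel_fun x) = vertex x /\ label2 (relabel_fun x) = label1 x.
Proof.
have [label_gt0 label_lt _] := dart_at_label kappa1 x0 x.
by have [-> ->] := dart_at_vertex_label kappa2 G_euler x0 label_lt; rewrite prednK.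
Qed.

Lemma relabel_fun_inj : injective relabel_fun.
Proof.
move=> x y exy; have [vx lx] := relabel_vertex_label x; have [vy ly] := relabel_vertex_label y.
have [_ _ <-] := dart_at_label kappa1 x0 x; have [_ _ <-] := dart_at_label kappa1 x0 y.
by rewrite -vx -vy -lx -ly exy.
Qed.

Definition relabel := perm relabel_fun_inj.

Lemma relabel_vertex x : vertex (relabel x) = vertex x.
Proof. by rewrite permE; case: (relabel_vertex_label x). Qed.

Lemma relabel_dart_at v (j : 'I_(deg v)) : relabel (dart1 v j) = dart2 v j.
Proof. by rewrite permE /relabel_fun; have [-> ->] := dart_at_vertex_label kappa1 G_euler x0 (ltn_ord j). Qed.

Lemma block_form_relabel z :
  block_form h deg dart2 z = block_form h deg dart1 (fun x => z (relabel x)).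
Proof.
by apply: eq_bigr => v _; congr h; apply/ffunP => j; rewrite !ffunE relabel_dart_at.
Qed.

Lemma relabel_walk_perm e : exists e2,
  relabel (walk_perm kappa1 (e, true)) = walk_perm kappa2 (e2, true) /\
  relabel (walk_perm kappa1 (e, false)) = walk_perm kappa2 (e2, false).
Proof.
have [odd_k k_lt] := kin_odd_lt kappa1 e.
have k_gt0 : (0 < kin1 e)%N by case: (kin1 e) odd_k.
have [e2 [_ dart_e2 spec_e2]] := dart_atP kappa2 G_euler x0 (leq_ltn_trans (leq_pred _) k_lt).
rewrite prednK // odd_k in dart_e2 spec_e2; case: spec_e2 => head_e2 kin_e2.
exists e2; split.
  by rewrite !walk_perm_true permE /relabel_fun dart_vertex_head dart_label_head dart_e2.
rewrite !walk_perm_false permE /relabel_fun.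
have [tail_s kout_s] := ksucc_tail_kout kappa1 e.
rewrite dart_vertex_tail dart_label_tail tail_s kout_s /=.
have [e3 [_ -> spec_e3]] := dart_atP kappa2 G_euler x0 k_lt.
rewrite /= odd_k /= in spec_e3 *; case: spec_e3 => tail_e3 kout_e3.
have [tail_s2 kout_s2] := ksucc_tail_kout kappa2 e2.
suff -> : e3 = ksucc end1 end2 om2 kin2 kout2 e2 by [].
(* both leave the same vertex with the same label *)
apply: (kout_inj kappa2 (v := Defs.head end1 end2 om1 e)); rewrite ?inE ?tail_e3 ?tail_s2 ?head_e2 //.
by rewrite kout_e3 kout_s2 kin_e2.
Qed.

Lemma odd_relabel :
  odd_perm relabel = odd_perm (walk_perm kappa1) (+) odd_perm (walk_perm kappa2).
Proof.
pose rho := (walk_perm kappa1 * relabel * (walk_perm kappa2)^-1)%g.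
have rhoE x : rho x = ((rho (x.1, true)).1, x.2).
  case: x => e b; have [e2 [rel_t rel_f]] := relabel_walk_perm e.
  rewrite /rho !(permM (walk_perm kappa1 * relabel)%g) !(permM (walk_perm kappa1) relabel).
  by case: b; rewrite /= ?rel_f rel_t !permK.
have := @odd_perm_fst _ rho (fun e => (rho (e, true)).1) rhoE.
rewrite /rho odd_permM (odd_permM (walk_perm kappa1)) odd_permV.
by case: (odd_perm (walk_perm kappa1)); case: (odd_perm relabel); case: (odd_perm (walk_perm kappa2)).
Qed.

Definition reversed (e : E) : bool := om1 e != om2 e.

Lemma sign_relabel : (-1) ^+ odd_perm relabel =
  (-1) ^+ ncircuits end1 end2 om1 kin1 kout1 * (-1) ^+ ncircuits end1 end2 om2 kin2 kout2 *
  \prod_e (-1) ^+ reversed e :> R.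
Proof.
rewrite odd_relabel signr_addb !(sign_walk_perm kappa1, sign_walk_perm kappa2).
have -> : \prod_e (-1) ^+ reversed e = \prod_e (-1) ^+ om1 e * \prod_e (-1) ^+ om2 e :> R.
  by rewrite -big_split /=; apply: eq_bigr => e _; rewrite /reversed negb_eqb signr_addb.
set a := (-1) ^+ #|E|; set c1 := (-1) ^+ ncircuits _ _ _ _ _; set c2 := (-1) ^+ ncircuits _ _ _ _ _.
set P1 := \prod_e _; set P2 := \prod_e _.
have sign_sq : a * a = 1 by rewrite -expr2 sqrr_sign.
by transitivity (a * a * (c1 * c2 * (P1 * P2))); [ring | rewrite sign_sq mul1r].
Qed.

Definition flip_reversed (psi : {ffun E -> bool}) : {ffun E -> bool} :=
  [ffun e => psi e (+) reversed e].

Lemma flip_reversed_inj : injective flip_reversed.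
Proof.
move=> psi psi' eq_flip; apply/ffunP => e.
by have := congr1 (fun f : {ffun E -> bool} => f e) eq_flip; rewrite !ffunE => /addIb.
Qed.

(* The sign relating the vector on dart [x] in the two settings:
   [f_k = - e_(k + l)] and [f_(k + l) = e_k]. *)
Definition dart_sign (psi : {ffun E -> bool}) (x : D) : R :=
  (-1) ^+ (reversed x.1 && (psi x.1 == (x.2 != om1 x.1))).

Lemma dart_vec_reversed psi x :
  dart_vec om2 R l (psi_index (flip_reversed psi)) x =
  dart_sign psi x *: dart_vec om1 R l (psi_index psi) x.
Proof.
have fvec_lo k : (k < l)%N -> fvec R l k = - evec R l (k + l) by move=> lt_k; rewrite /fvec lt_k.
have fvec_hi k : fvec R l (k + l) = evec R l k by rewrite /fvec ltnNge leq_addl /= addnK.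
case: x => e b; rewrite /dart_vec /dart_sign /psi_index /flip_reversed ffunE /reversed /=.
have lt_phi := ltn_ord (phi e).
by case: (om1 e); case: (om2 e); case: (psi e); case: b;
  rewrite /= ?muln1 ?muln0 ?addn0 ?fvec_hi ?(fvec_lo _ lt_phi) ?scale1r ?scaleN1r ?opprK.
Qed.

Lemma prod_dart_sign psi : \prod_x dart_sign psi x = \prod_e (-1) ^+ reversed e.
Proof.
transitivity (\prod_(x : D) dart_sign psi (x.1, x.2)); first by apply: eq_bigr => -[].
rewrite -(pair_bigA _ (fun e b => dart_sign psi (e, b))) /=; apply: eq_bigr => e _; rewrite big_bool /dart_sign /=.
by case: (reversed e); case: (psi e); case: (om1 e); rewrite /= ?expr0 ?expr1 ?mulr1 ?mul1r.
Qed.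

Lemma block_form_reversed psi :
  block_form h deg dart2 (dart_vec om2 R l (psi_index (flip_reversed psi))) =
  (\prod_e (-1) ^+ reversed e) * (-1) ^+ odd_perm relabel *
    block_form h deg dart1 (dart_vec om1 R l (psi_index psi)).
Proof.
rewrite (eq_block_form _ _ _ (dart_vec_reversed psi)) (block_form_scale h_ext
  (dart_at_vertex kappa2 G_euler x0) (@dart_at_inj _ _ _ _ _ _ _ kappa2 G_euler x0)
  (dart_at_surj kappa2 x0)) prod_dart_sign block_form_relabel.
rewrite (block_form_perm h_ext (dart_at_vertex kappa1 G_euler x0)
  (@dart_at_inj _ _ _ _ _ _ _ kappa1 G_euler x0) (dart_at_surj kappa1 x0) relabel_vertex).
by rewrite mulrA.
Qed.

Lemma s_hphi_invariant :
  s_hphi h end1 end2 phi om1 kin1 kout1 = s_hphi h end1 end2 phi om2 kin2 kout2.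
Proof.
rewrite (s_hphiE kappa1) (s_hphiE kappa2) [in RHS](reindex_inj flip_reversed_inj) /=.
under [in RHS]eq_bigr => psi _ do rewrite block_form_reversed.
rewrite -[in RHS]mulr_sumr sign_relabel.
set P := \prod_e _; set c1 := (-1) ^+ ncircuits _ _ _ _ _; set c2 := (-1) ^+ ncircuits _ _ _ _ _.
set S := \sum_psi _.
have P_sq : P * P = 1 by rewrite -big_split /=; apply: big1 => e _; rewrite -expr2 sqrr_sign.
have c2_sq : c2 * c2 = 1 by rewrite -expr2 sqrr_sign.
by transitivity (c2 * c2 * (P * P) * (c1 * S)); [rewrite P_sq c2_sq !mul1r | ring].
Qed.

End Invariance.

Lemma s_hphi_edgeless (R : nzRingType) (l : nat)
    (h : forall n : nat, {ffun 'I_n -> 'rV[R]_(2 * l)} -> R)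
    (V E : finType) (end1 end2 : E -> V) (phi : E -> 'I_l) :
  (E -> False) -> forall om1 kin1 kout1 om2 kin2 kout2,
  s_hphi h end1 end2 phi om1 kin1 kout1 = s_hphi h end1 end2 phi om2 kin2 kout2.
Proof.
move=> noE om1 kin1 kout1 om2 kin2 kout2.
have no_arc om kin kout v i : arc_at end1 end2 om kin kout v i = None.
  by rewrite /arc_at; case: ifP => _; case: pickP => // e; case: (noE e).
have no_circuit om kin kout : ncircuits end1 end2 om kin kout = 0%N.
  by apply/eqP; rewrite cards_eq0; apply/eqP/setP => S; rewrite inE; apply/imsetP => -[a]; case: (noE a).
rewrite /s_hphi !no_circuit; congr (_ * _); apply: eq_bigr => psi _; apply: eq_bigr => v _.
by congr h; apply/ffunP => j; rewrite !ffunE !no_arc.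
Qed.

Unset Implicit Arguments.
Set Strict Implicit.

Theorem lemma2 (R : numClosedFieldType) (l : nat)
  (h : forall n : nat, {ffun 'I_n -> 'rV[R]_(2 * l)} -> R)
  (Hh : exterior_form h)
  (V E : finType) (end1 end2 : E -> V)
  (HG : eulerian end1 end2)
  (phi : E -> 'I_l)
  (om1 : E -> bool) (kin1 kout1 : E -> nat)
  (om2 : E -> bool) (kin2 kout2 : E -> nat) :
  eulerian_orientation end1 end2 om1 ->
  compatible_ordering end1 end2 om1 kin1 kout1 ->
  eulerian_orientation end1 end2 om2 ->
  compatible_ordering end1 end2 om2 kin2 kout2 ->
  s_hphi h end1 end2 phi om1 kin1 kout1 = s_hphi h end1 end2 phi om2 kin2 kout2.
Proof.
(* Both orientations are Eulerian anyway: [kappa] matches in- and out-arcs with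
   the odd and even labels up to the degree. *)
move=> _ kappa1 _ kappa2.
have [e0 _ | noE] := pickP (@predT E).
  exact: (s_hphi_invariant Hh HG phi (e0, true) kappa1 kappa2).
by apply: s_hphi_edgeless => e; have := noE e.
Qed.
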